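(* Let $n\ge 2$ and let $\Phi\subset\mathbb{R}^3$ be a root system of type $I_2(n)$ lying in a 2-dimensional subspace of $\mathbb{R}^3$, with unit simple roots $\alpha_1,\alpha_2$ (so $\alpha_1\cdot\alpha_2=-\cos\frac{\pi}{n}$). Let $P$ be the group generated under the geometric product by $\Phi\cup\{e_1e_2e_3\}$ and let $G=P\cap\mathrm{Cl}^+(3)$. Then $G$, regarded as a set of vectors in the 4-dimensional Euclidean space $(\mathrm{Cl}^+(3),(\cdot,\cdot))$, is a root system of type $I_2(n)\oplus I_2(n)$, and $\{\alpha_1\alpha_1,\ \alpha_1\alpha_2,\ \alpha_1e_1e_2e_3,\ \alpha_2e_1e_2e_3\}$ is a set of simple roots for it, with Cartan matrix $$\begin{pmatrix}2&-2\cos\frac{\pi}{n}&0&0\\-2\cos\frac{\pi}{n}&2&0&0\\0&0&2&-2\cos\frac{\pi}{n}\\0&0&-2\cos\frac{\pi}{n}&2\end{pmatrix}.$$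
   Context: $\mathrm{Cl}(3)$ is the real Clifford algebra of Euclidean $\mathbb{R}^3$ with orthonormal basis $e_1,e_2,e_3$ ($e_i^2=1$, $e_ie_j=-e_je_i$ for $i\neq j$); vectors of $\mathbb{R}^3$ are elements of $\mathrm{Cl}(3)$ and $e_1e_2e_3$ is the pseudoscalar (inversion). The even subalgebra $\mathrm{Cl}^+(3)$ is spanned by $1,e_2e_3,e_3e_1,e_1e_2$. Reversal $\tilde{\ }$ reverses the order of vector factors. The spinor inner product $(R_1,R_2)=\tfrac12(R_1\tilde R_2+R_2\tilde R_1)$ makes $\mathrm{Cl}^+(3)$ a 4D Euclidean space with orthonormal basis $1,e_2e_3,e_3e_1,e_1e_2$. A root system is a finite set $\Phi$ of nonzero vectors spanning its linear span, with $\Phi\cap\mathbb{R}\alpha=\{\pm\alpha\}$ and $s_\alpha(\Phi)=\Phi$ for all $\alpha\in\Phi$, where $s_\alpha(x)=x-2\frac{(x,\alpha)}{(\alpha,\alpha)}\alpha$. The Cartan matrix of simple roots $\beta_i$ is $A_{ij}=2(\beta_i,\beta_j)/(\beta_i,\beta_i)$. $I_2(n)$ is the rank-2 root system of the dihedral group of order $2n$; $I_2(n)\oplus I_2(n)$ is the union of two copies in mutually orthogonal planes. *)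

From HB Require Import structures.
From mathcomp Require Import all_boot all_order all_algebra.
From mathcomp Require Import classical_sets boolp cardinality reals trigo.
Set Implicit Arguments. Unset Strict Implicit. Unset Printing Implicit Defensive.
Import Order.TTheory GRing.Theory Num.Theory.
Local Open Scope ring_scope.
Local Open Scope classical_set_scope.

Section RootSystems.
Context {R : realType} (V : lmodType R) (ip : V -> V -> R).

Definition refl (a x : V) : V := x - ((2 * ip x a) / ip a a) *: a.

(* Finite set of nonzero vectors, Phi ∩ R a = {±a}, stable under all s_a.
   ("spanning its linear span" is vacuous.) *)
Definition root_system (Phi : set V) : Prop :=
  [/\ finite_set Phi,
      (forall a, Phi a -> a != 0),
      (forall a, Phi a -> Phi (- a)),
      (forall a (c : R), Phi a -> Phi (c *: a) -> c = 1 \/ c = -1)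
    & (forall a x, Phi a -> Phi x -> Phi (refl a x))].

Definition simple_system (k : nat) (Phi : set V) (b : 'I_k -> V) : Prop :=
  [/\ (forall i, Phi (b i)),
      (forall c : 'I_k -> R, \sum_(i < k) c i *: b i = 0 -> forall i, c i = 0)
    & (forall x, Phi x -> exists c : 'I_k -> R,
          x = \sum_(i < k) c i *: b i /\
          ((forall i, 0 <= c i) \/ (forall i, c i <= 0)))].

Definition cartan (k : nat) (b : 'I_k -> V) : 'M[R]_k :=
  \matrix_(i < k, j < k) (2 * ip (b i) (b j) / ip (b i) (b i)).

End RootSystems.

Definition I2cartan (R : realType) (n : nat) : 'M[R]_2 :=
  \matrix_(i < 2, j < 2) (if i == j then 2 else - 2 * cos (pi / n%:R)).

Definition I2I2cartan (R : realType) (n : nat) : 'M[R]_4 :=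
  \matrix_(i < 4, j < 4)
    (if i == j then 2
     else if ((i : nat) %/ 2 == (j : nat) %/ 2)%N then - 2 * cos (pi / n%:R)
     else 0).

Definition is_type_I2 {R : realType} (V : lmodType R) (ip : V -> V -> R)
  (n : nat) (Phi : set V) : Prop :=
  root_system ip Phi /\
  exists b : 'I_2 -> V, simple_system Phi b /\ cartan ip b = I2cartan R n.

Definition is_type_I2I2 {R : realType} (V : lmodType R) (ip : V -> V -> R)
  (n : nat) (Phi : set V) : Prop :=
  root_system ip Phi /\
  exists Phi1 Phi2 : set V,
    [/\ Phi = Phi1 `|` Phi2,
        (forall a b, Phi1 a -> Phi2 b -> ip a b = 0),
        is_type_I2 ip n Phi1 & is_type_I2 ip n Phi2].

Definition dot3 {R : realType} (u v : 'rV[R]_3) : R := (u *m v^T) 0 0.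

(* An element is a row of 8 coordinates on the blades e_A, A ⊆ {1,2,3},*)
(* indexed by the bitmask a of A (bit 0 <-> e1, bit 1 <-> e2,           *)
(* bit 2 <-> e3), each blade being the increasing product, e.g.         *)
(* index 3 = e1e2, 5 = e1e3, 6 = e2e3, 7 = e1e2e3.                       *)
Definition Cl3 (R : realType) := 'rV[R]_8.

Definition bitn (k a : nat) : bool := odd (a %/ 2 ^ k).

Definition bxor (a b : nat) : nat := (\sum_(k < 3) (bitn k a (+) bitn k b) * 2 ^ k)%N.

(* number of transpositions needed to bring e_A e_B into increasing order *)
Definition nswaps (a b : nat) : nat :=
  (\sum_(i < 3) \sum_(j < 3 | (j < i)%N) (bitn i a && bitn j b))%N.

(* e_A e_B = (-1)^nswaps e_(A xor B), since e_i^2 = 1 *)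
Definition clmul {R : realType} (x y : Cl3 R) : Cl3 R :=
  \row_(c < 8) \sum_(a < 8) \sum_(b < 8 | bxor a b == c)
      ((-1) ^+ nswaps a b * x 0 a * y 0 b).

Definition blade (R : realType) (a : 'I_8) : Cl3 R := \row_(c < 8) (c == a)%:R.

Definition cl1 (R : realType) : Cl3 R := blade R (inord 0).
Definition e123 (R : realType) : Cl3 R := blade R (inord 7).

Definition grade (a : nat) : nat := (bitn 0 a + bitn 1 a + bitn 2 a)%N.

Definition vec {R : realType} (v : 'rV[R]_3) : Cl3 R :=
  \sum_(i < 3) v 0 i *: blade R (inord (2 ^ i)).

Definition cl_even (R : realType) : set (Cl3 R) :=
  [set x | forall a : 'I_8, odd (grade a) -> x 0 a = 0].

Definition clrev {R : realType} (x : Cl3 R) : Cl3 R :=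
  \row_(a < 8) ((-1) ^+ 'C(grade a, 2) * x 0 a).

(* spinor inner product (R1,R2) = 1/2 (R1 ~R2 + R2 ~R1), a scalar for
   R1, R2 in Cl^+(3); we take its scalar (grade-0) coordinate. *)
Definition spinor_ip {R : realType} (x y : Cl3 R) : R :=
  (clmul x (clrev y) + clmul y (clrev x)) 0 0 / 2.

Inductive gen_group {R : realType} (S : set (Cl3 R)) : Cl3 R -> Prop :=
  | gg_one : gen_group S (cl1 R)
  | gg_gen x : S x -> gen_group S x
  | gg_mul x y : gen_group S x -> gen_group S y -> gen_group S (clmul x y)
  | gg_inv x y : gen_group S x -> clmul x y = cl1 R -> clmul y x = cl1 R ->
                 gen_group S y.

From mathcomp Require Import all_boot all_order all_algebra.
From mathcomp Require Import classical_sets boolp cardinality reals trigo.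
From mathcomp Require Import zify ring lra.
Import Order.TTheory GRing.Theory Num.Theory.
Set Implicit Arguments. Unset Strict Implicit. Unset Printing Implicit Defensive.
Local Open Scope ring_scope.
Local Open Scope classical_set_scope.

(* The roots of [Phi] are the unit vectors [cos (k pi / n) u + sin (k pi / n) w],
   where [u = alpha_0] and [w] completes it to an orthonormal basis of the plane
   of [Phi]: the simple reflections generate all of them from [alpha_0] and
   [alpha_1], and conversely every positive root is brought down to a simple root
   by simple reflections lowering its height. In Cl(3) the product of two unit
   vectors of the plane is a rotor [cos t + sin t uw], and [e1e2e3] is central
   with square [-1], so every element of [P] is such a vector or rotor, or its
   product with [e1e2e3]. The even part of [P] is made of the rotors
   [cos (k pi / n) + sin (k pi / n) uw] and of the bivectors
   [cos (k pi / n) u e1e2e3 + sin (k pi / n) w e1e2e3]: two dihedral root systems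
   in the planes of the orthonormal pairs [(1, uw)] and [(u e1e2e3, w e1e2e3)],
   which are orthogonal for the spinor inner product. *)

Section RootSystems.
Variables (R : realType) (V : lmodType R) (ip : V -> V -> R).
Hypotheses (ip_linl : forall (c : R) x y z, ip (c *: x + y) z = c * ip x z + ip y z)
           (ipC : forall x y, ip x y = ip y x).

Lemma ip0l z : ip 0 z = 0.
Proof. by have := ip_linl 1 0 0 z; rewrite scaler0 addr0 mul1r => h; lra. Qed.
Lemma ipDl x y z : ip (x + y) z = ip x z + ip y z.
Proof. by rewrite -[x]scale1r ip_linl mul1r scale1r. Qed.
Lemma ipZl c x z : ip (c *: x) z = c * ip x z.
Proof. by rewrite -[c *: x]addr0 ip_linl ip0l addr0. Qed.
Lemma ipDr x y z : ip z (x + y) = ip z x + ip z y.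
Proof. by rewrite ipC ipDl !(ipC z). Qed.
Lemma ipZr c x z : ip z (c *: x) = c * ip z x.
Proof. by rewrite ipC ipZl ipC. Qed.
Lemma ip_suml I r (P : pred I) (F : I -> V) z :
  ip (\sum_(i <- r | P i) F i) z = \sum_(i <- r | P i) ip (F i) z.
Proof. exact: (big_morph (fun v => ip v z) (fun u v => ipDl u v z) (ip0l z)). Qed.

Lemma reflK a : ip a a != 0 -> involutive (refl ip a).
Proof.
move=> aa x; rewrite /refl; set t := 2 * ip x a / ip a a.
have -> : ip (x - t *: a) a = - ip x a.
  by rewrite addrC -scaleNr ip_linl /t; field.
by rewrite mulrN mulNr scaleNr opprK subrK.
Qed.

Lemma root_systemU (Phi1 Phi2 : set V) :
  root_system ip Phi1 -> root_system ip Phi2 ->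
  (forall a, Phi1 a -> ip a a != 0) -> (forall a, Phi2 a -> ip a a != 0) ->
  (forall a b, Phi1 a -> Phi2 b -> ip a b = 0) ->
  root_system ip (Phi1 `|` Phi2).
Proof.
move=> [fin1 nz1 neg1 red1 refl1] [fin2 nz2 neg2 red2 refl2] aniso1 aniso2 orth.
have nz_orth a c : ip a a != 0 -> ip a (c *: a) = 0 -> c *: a != 0 -> False.
  move=> aa; rewrite ipZr => /eqP; rewrite mulf_eq0 (negbTE aa) orbF => /eqP ->.
  by rewrite scale0r eqxx.
split.
- by rewrite finite_setU.
- by move=> a [/nz1|/nz2].
- by move=> a [/neg1|/neg2]; [left|right].
- move=> a c [ha|ha] [hc|hc].
  + exact: red1 _ _ ha hc.
  + by case: (nz_orth a c (aniso1 _ ha) (orth _ _ ha hc) (nz2 _ hc)).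
  + by case: (nz_orth a c (aniso2 _ ha) (etrans (ipC _ _) (orth _ _ hc ha)) (nz1 _ hc)).
  + exact: red2 _ _ ha hc.
- have refl_orth a x : ip x a = 0 -> refl ip a x = x.
    by move=> xa; rewrite /refl xa mulr0 mul0r scale0r subr0.
  move=> a x [ha|ha] [hx|hx].
  + by left; apply: refl1 _ _ ha hx.
  + by right; rewrite refl_orth // ipC (orth _ _ ha hx).
  + by left; rewrite refl_orth // (orth _ _ hx ha).
  + by right; apply: refl2 _ _ ha hx.
Qed.

Lemma count_lt_witness (T : eqType) (p q : pred T) (s : seq T) y :
  subpred q p -> y \in s -> p y -> ~~ q y -> (count q s < count p s)%N.
Proof.
move=> qp; elim: s => //= z s IH; rewrite inE => /orP[/eqP <-|ys] py qy.
  by rewrite py (negbTE qy) add0n add1n ltnS; apply: sub_count.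
have := IH ys py qy; case: (boolP (q z)) => [/qp -> |_] /=; lia.
Qed.

Section SimpleReflections.
Variables (k : nat) (Phi : set V) (b : 'I_k -> V) (rho : V).
Hypotheses (Phi_root : root_system ip Phi) (b_simple : simple_system Phi b)
  (Phi_pos : forall x, Phi x -> 0 < ip x x) (rho_pos : forall i, 0 < ip (b i) rho).

Lemma simple_coord_uniq (c d : 'I_k -> R) :
  \sum_i c i *: b i = \sum_i d i *: b i -> c =1 d.
Proof.
move=> cd i; have [_ indep _] := b_simple.
apply/eqP; rewrite -subr_eq0; apply/eqP; apply: (indep (fun j => c j - d j) _ i).
by under eq_bigr do rewrite scalerBl; rewrite sumrB cd subrr.
Qed.

Lemma sum_simple_subZ (c : 'I_k -> R) i t :
  \sum_j c j *: b j - t *: b i = \sum_j (c j - (j == i)%:R * t) *: b j.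
Proof.
under [RHS]eq_bigr do rewrite scalerBl; rewrite sumrB; congr (_ - _).
rewrite (bigD1 i) //= big1 ?addr0 => [|j /negbTE ->]; first by rewrite eqxx mul1r.
by rewrite mul0r scale0r.
Qed.

Lemma exists_simple_pairing_gt0 x (c : 'I_k -> R) :
  Phi x -> x = \sum_i c i *: b i -> (forall i, 0 <= c i) ->
  exists i, 0 < c i /\ 0 < ip (b i) x.
Proof.
move=> Phix xE c_ge0.
have [i ci_x] : exists i, 0 < c i * ip (b i) x.
  apply/existsP; apply: contraT => /existsPn c_x_le0.
  have := Phi_pos Phix; rewrite {1}xE ip_suml; under eq_bigr do rewrite ipZl.
  by rewrite ltNge sumr_le0 // => j _; rewrite leNgt c_x_le0.
have ci_gt0 : 0 < c i.
  by rewrite lt_neqAle c_ge0 andbT; apply: contraTneq ci_x => <-; rewrite mul0r ltxx.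
by exists i; split; last by rewrite -(pmulr_rgt0 _ ci_gt0).
Qed.

Lemma root_simple_multiple x i (c : R) : Phi x -> x = c *: b i -> 0 < c -> x = b i.
Proof.
move=> Phix xE c_gt0; have [b_root _ _] := b_simple; have [_ _ _ Phi_reduced _] := Phi_root.
have Phi_cb : Phi (c *: b i) by rewrite -xE.
have [c1|cN1] := Phi_reduced _ _ (b_root i) Phi_cb; first by rewrite xE c1 scale1r.
by move: c_gt0; rewrite cN1 ltr0N1.
Qed.

Lemma positive_root_descent x (c : 'I_k -> R) :
  Phi x -> x = \sum_i c i *: b i -> (forall i, 0 <= c i) ->
  (exists i, x = b i) \/
  exists i (d : 'I_k -> R), [/\ Phi (refl ip (b i) x),
    refl ip (b i) x = \sum_j d j *: b j, (forall j, 0 <= d j)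
    & ip (refl ip (b i) x) rho < ip x rho].
Proof.
move=> Phix xE c_ge0; have [b_root _ b_decomp] := b_simple.
have [i [ci_gt0 bx_gt0]] := exists_simple_pairing_gt0 Phix xE c_ge0.
case: (boolP [exists j, (j != i) && (0 < c j)]) =>
    [/existsP [j /andP [ji cj_gt0]] | /existsPn others].
- right; set t := 2 * ip x (b i) / ip (b i) (b i).
  have t_gt0 : 0 < t by rewrite /t ipC divr_gt0 ?mulr_gt0 ?Phi_pos.
  have Phiy : Phi (refl ip (b i) x) by case: Phi_root => _ _ _ _; apply.
  have yE : refl ip (b i) x = \sum_j (c j - (j == i)%:R * t) *: b j.
    by rewrite /refl -/t -sum_simple_subZ -xE.
  have [d [dE d_sign]] := b_decomp _ Phiy.
  have cd := simple_coord_uniq (etrans (esym yE) dE).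
  exists i, d; split => //.
  (* The reflected root keeps the coordinate [c j > 0], so it is still positive. *)
  + case: d_sign => // d_le0; have := d_le0 j; rewrite -cd (negbTE ji) mul0r subr0.
    by rewrite leNgt cj_gt0.
  + have := mulr_gt0 t_gt0 (rho_pos i).
    by rewrite /refl -/t addrC -scaleNr ip_linl; lra.
- left; exists i; apply: (root_simple_multiple Phix _ ci_gt0).
  rewrite xE (bigD1 i) //= big1 ?addr0 // => j ji.
  have /eqP -> : c j == 0 by rewrite eq_le c_ge0 andbT leNgt; have := others j; rewrite ji.
  by rewrite scale0r.
Qed.

Theorem root_sub_simple_closure (D : set V) :
  (forall i, D (b i)) -> (forall x, D x -> D (- x)) ->
  (forall i x, D x -> D (refl ip (b i) x)) -> Phi `<=` D.
Proof.
move=> Db Dneg Drefl.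
have [b_root _ b_decomp] := b_simple.
have [_ _ Phi_neg _ _] := Phi_root.
have [s Phi_s] : exists s : seq V, Phi = [set` s] by apply/finite_seqP; case: Phi_root.
have bb_neq0 i : ip (b i) (b i) != 0 by rewrite gt_eqF // Phi_pos.
have D_pos N x c : Phi x -> x = \sum_i c i *: b i -> (forall i, 0 <= c i) ->
    (count (fun y => (ip y rho < ip x rho)%R) s < N)%N -> D x.
  elim: N x c => // N IH x c Phix xE c_ge0 count_x.
  have [[i ->] // | [i [d [Phiy yE d_ge0 y_lt]]]] := positive_root_descent Phix xE c_ge0.
  rewrite -(reflK (bb_neq0 i) x); apply/Drefl/(IH _ d Phiy yE d_ge0).
  move: count_x; rewrite ltnS; apply: leq_trans.
  apply: (count_lt_witness (y := refl ip (b i) x)).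
  - by move=> z /= /lt_trans; apply.
  - by have : [set` s] (refl ip (b i) x) by rewrite -Phi_s.
  - exact: y_lt.
  - by rewrite /= ltxx.
move=> x Phix; have [c [xE [c_ge0|c_le0]]] := b_decomp _ Phix.
  exact: D_pos xE c_ge0 (ltnSn _).
rewrite -[x]opprK; apply/Dneg/(D_pos _ (- x) (fun i => - c i) (Phi_neg _ Phix)).
- by rewrite xE -sumrN; apply: eq_bigr => i _; rewrite scaleNr.
- by move=> i; rewrite oppr_ge0.
- exact: ltnSn.
Qed.

End SimpleReflections.
End RootSystems.

Lemma int_parity (k : int) : exists m : int, k = 2 * m \/ k = 2 * m + 1.
Proof.
have := divz_eq k 2; have := modz_ge0 k (isT : 2 != 0 :> int).
have := ltz_pmod k (isT : 0 < 2 :> int).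
by exists (k %/ 2)%Z; lia.
Qed.

Lemma int_shift2 (E : int -> Prop) :
  (forall j, E j -> E (j + 2)) -> (forall j, E j -> E (j - 2)) ->
  forall j, E j -> forall m : int, E (j + 2 * m).
Proof.
move=> up down j Ej.
have shift (p : nat) : E (j + 2 * p%:Z) /\ E (j - 2 * p%:Z).
  elim: p => [|p [IHup IHdown]]; first by rewrite mulr0 oppr0 !addr0.
  split; [move: (up _ IHup) | move: (down _ IHdown)]; congr E; lia.
by case=> p; [exact: (shift p).1 | move: (shift p.+1).2; congr E; lia].
Qed.

Lemma sum_ord2 (V : nmodType) (F : 'I_2 -> V) : \sum_i F i = F 0 + F 1.
Proof. by rewrite !big_ord_recr big_ord0 /= add0r; congr (F _ + F _); apply/val_inj. Qed.

Lemma sum_ord4 (V : nmodType) (F : 'I_4 -> V) :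
  \sum_i F i = F (inord 0) + F (inord 1) + F (inord 2) + F (inord 3).
Proof.
rewrite !big_ord_recr big_ord0 /= add0r.
by congr (F _ + F _ + F _ + F _); apply/val_inj; rewrite /= inordK.
Qed.

Lemma ord2_cases (i : 'I_2) : i = 0 \/ i = 1.
Proof. by case: i => [[|[|//]] ?]; [left|right]; apply/val_inj. Qed.

Section Dihedral.
Variables (R : realType) (n : nat).
Hypothesis n_ge2 : (2 <= n)%N.

Definition ang (k : int) : R := k%:~R * (pi / n%:R).

Lemma angD k l : ang (k + l) = ang k + ang l.
Proof. by rewrite /ang intrD mulrDl. Qed.
Lemma angN k : ang (- k) = - ang k.
Proof. by rewrite /ang intrN mulNr. Qed.
Lemma ang0 : ang 0 = 0.
Proof. by rewrite /ang mul0r. Qed.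
Lemma ang1 : ang 1 = pi / n%:R.
Proof. by rewrite /ang mul1r. Qed.
Lemma angn : ang n = pi.
Proof. by rewrite /ang mulrC -mulrA mulVf ?mulr1 // pnatr_eq0; lia. Qed.
Lemma angDn (k : int) : ang (k + n) = ang k + pi.
Proof. by rewrite angD angn. Qed.
Lemma ang_pred_n : ang (n%:Z - 1) = pi - pi / n%:R.
Proof. by rewrite angD angN ang1 angn. Qed.

Lemma pi_div_gt0 : 0 < pi / n%:R :> R.
Proof. by rewrite divr_gt0 ?pi_gt0 // ltr0n; lia. Qed.
Lemma sin_pi_div_gt0 : 0 < sin (pi / n%:R) :> R.
Proof.
apply: sin_gt0_pi; rewrite pi_div_gt0 /= ltr_pdivrMr ?ltr0n; last by lia.
by rewrite ltr_pMr ?pi_gt0 // ltr1n; lia.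
Qed.
Lemma cos_pi_div_lt1 : cos (pi / n%:R) < 1 :> R.
Proof.
rewrite lt_neqAle cos_le1 andbT; apply/eqP => cos1.
have := cos2Dsin2 (pi / n%:R : R); rewrite cos1 expr1n => sum1.
have /eqP : sin (pi / n%:R) ^+ 2 = 0 :> R by lra.
by rewrite sqrf_eq0 (gt_eqF sin_pi_div_gt0).
Qed.
Lemma cos_ang_pred_n : cos (ang (n%:Z - 1)) = - cos (pi / n%:R).
Proof. by rewrite ang_pred_n addrC cosDpi cosN. Qed.
Lemma sin_ang_pred_n : sin (ang (n%:Z - 1)) = sin (pi / n%:R).
Proof. by rewrite ang_pred_n addrC sinDpi sinN opprK. Qed.

Lemma cosDz2pi (x : R) (q : int) : cos (x + q%:~R * (pi *+ 2)) = cos x.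
Proof.
case: q => m; first by rewrite mulr_natl (periodicn (@cosD2pi R)).
by rewrite -(periodicn (@cosD2pi R) m.+1) NegzE; congr cos; ring.
Qed.
Lemma sinDz2pi (x : R) (q : int) : sin (x + q%:~R * (pi *+ 2)) = sin x.
Proof.
case: q => m; first by rewrite mulr_natl (periodicn (@sinD2pi R)).
by rewrite -(periodicn (@sinD2pi R) m.+1) NegzE; congr sin; ring.
Qed.

Lemma ang_mod (k : int) : exists r : nat, exists q : int,
  (r < n *+ 2)%N /\ ang k = ang r + q%:~R * (pi *+ 2).
Proof.
have N_neq0 : (n *+ 2)%:Z != 0 by apply/eqP; lia.
have := modz_ge0 k N_neq0; have := ltz_pmod k (_ : 0 < (n *+ 2)%:Z).
exists `|(k %% (n *+ 2)%:Z)%Z|%N, (k %/ (n *+ 2)%:Z)%Z; split; first by lia.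
rewrite {1}(divz_eq k (n *+ 2)%:Z) addrC angD; congr (_ + _); first by congr ang; lia.
rewrite /ang intrM -mulrA; congr (_ * _).
have -> : (n *+ 2)%:~R = n%:R *+ 2 :> R by rewrite -[LHS]/((n *+ 2)%:R) !mulr2n natrD.
by field; rewrite pnatr_eq0; lia.
Qed.

Lemma sin_ang_ge0 (r : nat) : (r <= n)%N -> 0 <= sin (ang r).
Proof.
have angr : ang r = r%:R * (pi / n%:R) by [].
move=> rn; apply: sin_ge0_pi; rewrite angr mulr_ge0 ?ler0n ?(ltW pi_div_gt0) //=.
rewrite [leRHS](_ : _ = n%:R * (pi / n%:R)); last by rewrite -[RHS]/(ang n) angn.
by rewrite ler_pM2r ?pi_div_gt0 // ler_nat.
Qed.
Lemma sin_ang_le0 (r : nat) : (n <= r <= n *+ 2)%N -> sin (ang r) <= 0.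
Proof.
move=> /andP [nr rn2]; have -> : Posz r = (r - n)%N%:Z + n by lia.
by rewrite angDn sinDpi oppr_le0 sin_ang_ge0 //; lia.
Qed.

Lemma sin_ang_succ_sign (k : int) :
  (0 <= sin (ang k) /\ 0 <= sin (ang (k + 1))) \/
  (sin (ang k) <= 0 /\ sin (ang (k + 1)) <= 0).
Proof.
have [r [q [r_lt angk]]] := ang_mod k.
have angk1 : ang (k + 1) = ang (r.+1)%N + q%:~R * (pi *+ 2).
  by rewrite angD angk -addrA [_ + ang 1]addrC addrA -angD; congr (ang _ + _); lia.
rewrite angk angk1 !sinDz2pi.
have [rn|nr] := ltnP r n; [left|right]; split.
- by apply: sin_ang_ge0; lia.
- by apply: sin_ang_ge0; lia.
- by apply: sin_ang_le0; lia.
- by apply: sin_ang_le0; lia.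
Qed.

Section Polar.
Variable V : lmodType R.

Definition polar (x y : V) (th : R) : V := cos th *: x + sin th *: y.

Definition dihedral (x y : V) : set V := [set v | exists k : int, v = polar x y (ang k)].

Lemma polar0 x y : polar x y 0 = x.
Proof. by rewrite /polar cos0 sin0 scale1r scale0r addr0. Qed.

Lemma polar_angDn x y (k : int) : polar x y (ang (k + n)) = - polar x y (ang k).
Proof. by rewrite /polar angDn cosDpi sinDpi !scaleNr opprD. Qed.

Lemma dihedral_finite x y : finite_set (dihedral x y).
Proof.
apply: (sub_finite_set _ (finite_seq [seq polar x y (ang r) | r : nat <- iota 0 (n *+ 2)])).
move=> _ [k ->]; have [r [q [r_lt angk]]] := ang_mod k.
apply/mapP; exists r; first by rewrite mem_iota.
by rewrite /polar angk cosDz2pi sinDz2pi.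
Qed.

Lemma polar_angB2n x y (k : int) : polar x y (ang (k - n%:Z - n%:Z)) = polar x y (ang k).
Proof. by rewrite -[in RHS](_ : k - n%:Z - n%:Z + n%:Z + n%:Z = k) ?polar_angDn ?opprK //; lia. Qed.

Lemma dihedralN x y v : dihedral x y v -> dihedral x y (- v).
Proof. by move=> [k ->]; exists (k + n); rewrite polar_angDn. Qed.

End Polar.

Lemma cos_reflect (a b : R) : cos b - 2 * cos (b - a) * cos a = cos (2 * a + pi - b).
Proof.
have -> : 2 * a + pi - b = - ((b - a) - a) + pi by ring.
rewrite cosDpi cosN -{1}(subrK a b); move: (b - a) => c.
by rewrite cosB cosD; ring.
Qed.
Lemma sin_reflect (a b : R) : sin b - 2 * cos (b - a) * sin a = sin (2 * a + pi - b).
Proof.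
have -> : 2 * a + pi - b = - ((b - a) - a) + pi by ring.
rewrite sinDpi sinN opprK -{1}(subrK a b); move: (b - a) => c.
by rewrite sinB sinD; ring.
Qed.

Section InnerProduct.
Variables (V : lmodType R) (ip : V -> V -> R).
Hypotheses (ip_linl : forall (c : R) x y z, ip (c *: x + y) z = c * ip x z + ip y z)
           (ipC : forall x y, ip x y = ip y x).
Local Notation ip0l := (ip0l ip_linl).
Local Notation ipDl := (ipDl ip_linl).
Local Notation ipZl := (ipZl ip_linl).
Local Notation ipDr := (ipDr ip_linl ipC).
Local Notation ipZr := (ipZr ip_linl ipC).

Section Frame.
Variables x y : V.
Hypotheses (x_unit : ip x x = 1) (y_unit : ip y y = 1) (xy_orth : ip x y = 0).

Lemma ip_polar a b : ip (polar x y a) (polar x y b) = cos (a - b).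
Proof. by rewrite /polar !ipDl !ipDr !ipZl !ipZr x_unit y_unit (ipC y) xy_orth cosB; ring. Qed.
Lemma ip_polarx a : ip (polar x y a) x = cos a.
Proof. by rewrite /polar ipDl !ipZl x_unit (ipC y) xy_orth; ring. Qed.

Lemma frame_coord_eq0 p q : p *: x + q *: y = 0 -> p = 0 /\ q = 0.
Proof.
move=> pq0; have := congr1 (ip^~ x) pq0; have := congr1 (ip^~ y) pq0.
by rewrite /= !ipDl !ipZl !ip0l x_unit y_unit xy_orth (ipC y) xy_orth; split; lra.
Qed.

Lemma refl_polar k j :
  refl ip (polar x y (ang k)) (polar x y (ang j)) = polar x y (ang (2 * k + n - j)).
Proof.
rewrite /refl !ip_polar subrr cos0 divr1 /polar scalerDr !scalerA opprD addrACA.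
rewrite -!scalerBl cos_reflect sin_reflect.
by rewrite !angD angN angn /ang intrM; congr (cos _ *: _ + sin _ *: _); ring.
Qed.

Lemma dihedral_root_system : root_system ip (dihedral x y).
Proof.
split.
- exact: dihedral_finite.
- move=> _ [k ->]; apply: contra_eq_neq (ip_polar (ang k) (ang k)) => ->.
  by rewrite ip0l subrr cos0 eq_sym oner_neq0.
- exact: dihedralN.
- move=> _ c [k ->] [j polarj]; have := ip_polar (ang j) (ang j).
  rewrite -polarj ipZl ipZr ip_polar !subrr cos0 mulr1 -expr2 => /eqP.
  by rewrite sqrf_eq1 => /orP [/eqP ->|/eqP ->]; [left|right].
- by move=> _ _ [k ->] [j ->]; exists (2 * k + n - j); rewrite refl_polar.
Qed.

Definition dihedral_base (i : 'I_2) : V := if i == 0 then x else polar x y (ang (n%:Z - 1)).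

Lemma dihedral_base_comb (c : 'I_2 -> R) :
  \sum_i c i *: dihedral_base i =
  (c 0 - c 1 * cos (pi / n%:R)) *: x + (c 1 * sin (pi / n%:R)) *: y.
Proof.
rewrite sum_ord2 /dihedral_base eqxx /= /polar cos_ang_pred_n sin_ang_pred_n.
by rewrite scalerDr !scalerA addrA -scalerDl mulrN.
Qed.

Lemma dihedral_simple : simple_system (dihedral x y) dihedral_base.
Proof.
have sin_gt0 := sin_pi_div_gt0.
split.
- move=> i; rewrite /dihedral_base; case: ifP => _; last by exists (n%:Z - 1).
  by exists 0; rewrite ang0 polar0.
- move=> c; rewrite dihedral_base_comb => /frame_coord_eq0 [c01 c1].
  have c1_0 : c 1 = 0 by move/eqP: c1; rewrite mulf_eq0 (gt_eqF sin_gt0) orbF => /eqP.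
  have c0_0 : c 0 = 0 by move: c01; rewrite c1_0 mul0r subr0.
  by move=> i; case: i => [[|[|//]] ?]; [rewrite -c0_0 | rewrite -c1_0]; congr c; apply/val_inj.
- move=> _ [k ->].
  (* The two coordinates of [polar x y (ang k)] have the signs of [sin (ang (k + 1))]
     and [sin (ang k)], which agree. *)
  exists (fun i : 'I_2 => sin (ang (if i == 0 then k + 1 else k)) / sin (pi / n%:R)).
  split.
  + rewrite dihedral_base_comb /= angD ang1 sinD /polar.
    by congr (_ *: _ + _ *: _); field; rewrite gt_eqF.
  + have [[s0 s1]|[s0 s1]] := sin_ang_succ_sign k; [left|right] => i; case: ifP => _.
    * by rewrite divr_ge0 // ltW.
    * by rewrite divr_ge0 // ltW.
    * by rewrite mulr_le0_ge0 // invr_ge0 ltW.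
    * by rewrite mulr_le0_ge0 // invr_ge0 ltW.
Qed.

Lemma ip_dihedral_base i j :
  ip (dihedral_base i) (dihedral_base j) = if i == j then 1 else - cos (pi / n%:R).
Proof.
case: i => [[|[|//]] ?]; case: j => [[|[|//]] ?]; rewrite /dihedral_base /=.
- by rewrite x_unit.
- by rewrite ipC ip_polarx cos_ang_pred_n.
- by rewrite ip_polarx cos_ang_pred_n.
- by rewrite ip_polar subrr cos0.
Qed.

Lemma dihedral_type_I2 : is_type_I2 ip n (dihedral x y).
Proof.
split; first exact: dihedral_root_system.
exists dihedral_base; split; first exact: dihedral_simple.
apply/matrixP => i j; rewrite !mxE !ip_dihedral_base eqxx divr1.
by case: eqP => _; ring.
Qed.

End Frame.

Section TwoFrames.
Variables x y z w : V.
Hypotheses (x_unit : ip x x = 1) (y_unit : ip y y = 1) (xy_orth : ip x y = 0)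
           (z_unit : ip z z = 1) (w_unit : ip w w = 1) (zw_orth : ip z w = 0)
           (xz_orth : ip x z = 0) (xw_orth : ip x w = 0)
           (yz_orth : ip y z = 0) (yw_orth : ip y w = 0).

Lemma ip_dihedral_orth a b : dihedral x y a -> dihedral z w b -> ip a b = 0.
Proof.
move=> [k ->] [j ->].
by rewrite /polar !ipDl !ipDr !ipZl !ipZr xz_orth xw_orth yz_orth yw_orth; ring.
Qed.

Lemma frame4_coord_eq0 p q r s :
  p *: x + q *: y + r *: z + s *: w = 0 -> [/\ p = 0, q = 0, r = 0 & s = 0].
Proof.
move=> sum0; have ipsum0 v := congr1 (ip^~ v) sum0.
move: (ipsum0 x) (ipsum0 y) (ipsum0 z) (ipsum0 w); rewrite /= !ipDl !ipZl !ip0l.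
rewrite x_unit y_unit z_unit w_unit xy_orth zw_orth xz_orth xw_orth yz_orth yw_orth.
rewrite !(ipC y x) !(ipC z x) !(ipC w x) !(ipC z y) !(ipC w y) !(ipC w z).
by rewrite xy_orth zw_orth xz_orth xw_orth yz_orth yw_orth; split; lra.
Qed.

Definition dihedral_base4 (i : 'I_4) : V :=
  nth 0 [:: x; polar x y (ang (n%:Z - 1)); z; polar z w (ang (n%:Z - 1))] i.


Lemma dihedral_base4_comb (c : 'I_4 -> R) :
  \sum_i c i *: dihedral_base4 i =
  (c (inord 0) - c (inord 1) * cos (pi / n%:R)) *: x + (c (inord 1) * sin (pi / n%:R)) *: y +
  (c (inord 2) - c (inord 3) * cos (pi / n%:R)) *: z + (c (inord 3) * sin (pi / n%:R)) *: w.
Proof.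
rewrite sum_ord4 /dihedral_base4 !inordK //= /polar !cos_ang_pred_n !sin_ang_pred_n.
rewrite !scalerDr !scalerA !mulrN !scaleNr !scalerBl.
by rewrite !addrA.
Qed.

Lemma dihedral_base4_mem :
  [/\ dihedral x y x, dihedral x y (polar x y (ang (n%:Z - 1))),
      dihedral z w z & dihedral z w (polar z w (ang (n%:Z - 1)))].
Proof.
by split; [exists 0; rewrite ang0 polar0 | eexists | exists 0; rewrite ang0 polar0 | eexists].
Qed.

Lemma ip_dihedral_base4 i j :
  ip (dihedral_base4 i) (dihedral_base4 j) =
  if i == j then 1 else if (i %/ 2 == j %/ 2)%N then - cos (pi / n%:R) else 0.
Proof.
have [mx mx' mz mz'] := dihedral_base4_mem.
case: i => [[|[|[|[|//]]]] ?]; case: j => [[|[|[|[|//]]]] ?]; rewrite /dihedral_base4 /=.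
all: first [by rewrite ip_dihedral_orth | by rewrite ipC ip_dihedral_orth | idtac].
all: rewrite ?x_unit ?z_unit ?(ip_polar x_unit y_unit xy_orth) ?(ip_polar z_unit w_unit zw_orth).
all: rewrite ?(ipC x) ?(ipC z) ?(ip_polarx x_unit xy_orth) ?(ip_polarx z_unit zw_orth).
all: by rewrite ?subrr ?cos0 ?cos_ang_pred_n.
Qed.

Lemma dihedralU_simple : simple_system (dihedral x y `|` dihedral z w) dihedral_base4.
Proof.
have [mx mx' mz mz'] := dihedral_base4_mem.
have sin_gt0 := sin_pi_div_gt0.
split.
- by case=> [[|[|[|[|//]]]] ?]; [left|left|right|right].
- move=> c; rewrite dihedral_base4_comb => /frame4_coord_eq0 [c01 c1 c23 c3].
  have [c1_0 c3_0] : c (inord 1) = 0 /\ c (inord 3) = 0.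
    by move/eqP: c1; move/eqP: c3; rewrite !mulf_eq0 !(gt_eqF sin_gt0) !orbF => /eqP ? /eqP.
  move: c01 c23; rewrite c1_0 c3_0 !mul0r !subr0 => c0_0 c2_0.
  by case=> [[|[|[|[|//]]]] ?]; [rewrite -c0_0|rewrite -c1_0|rewrite -c2_0|rewrite -c3_0];
    congr c; apply/val_inj; rewrite /= inordK.
- move=> v [vxy|vzw].
  + have [_ _ /(_ v vxy) [c [vE c_sign]]] := dihedral_simple x_unit y_unit xy_orth.
    exists (fun i : 'I_4 => nth 0 [:: c 0; c 1; 0; 0] i); split.
      rewrite dihedral_base4_comb vE dihedral_base_comb !inordK //=.
      by rewrite !mul0r subrr !scale0r !addr0.
    by case: c_sign => c_sign; [left|right]; case=> [[|[|[|[|//]]]] ?] /=.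
  + have [_ _ /(_ v vzw) [c [vE c_sign]]] := dihedral_simple z_unit w_unit zw_orth.
    exists (fun i : 'I_4 => nth 0 [:: 0; 0; c 0; c 1] i); split.
      rewrite dihedral_base4_comb vE dihedral_base_comb !inordK //=.
      by rewrite !mul0r subrr !scale0r !add0r.
    by case: c_sign => c_sign; [left|right]; case=> [[|[|[|[|//]]]] ?] /=.
Qed.

Lemma cartan_dihedral_base4 : cartan ip dihedral_base4 = I2I2cartan R n.
Proof.
apply/matrixP => i j; rewrite !mxE !ip_dihedral_base4 eqxx divr1.
by case: eqP => _; [|case: eqP => _]; ring.
Qed.

Lemma dihedralU_I2I2 :
  [/\ root_system ip (dihedral x y `|` dihedral z w),
      is_type_I2I2 ip n (dihedral x y `|` dihedral z w),
      simple_system (dihedral x y `|` dihedral z w) dihedral_base4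
    & cartan ip dihedral_base4 = I2I2cartan R n].
Proof.
have unit_roots x' y' : ip x' x' = 1 -> ip y' y' = 1 -> ip x' y' = 0 ->
    forall a, dihedral x' y' a -> ip a a != 0.
  by move=> ? ? ? _ [k ->]; rewrite ip_polar // subrr cos0 oner_neq0.
have rootU : root_system ip (dihedral x y `|` dihedral z w).
  apply: (root_systemU ip_linl ipC _ _ _ _ ip_dihedral_orth).
  - exact: dihedral_root_system x_unit y_unit xy_orth.
  - exact: dihedral_root_system z_unit w_unit zw_orth.
  - exact: unit_roots x_unit y_unit xy_orth.
  - exact: unit_roots z_unit w_unit zw_orth.
split=> //.
- split=> //; exists (dihedral x y), (dihedral z w); split=> //.
  + exact: ip_dihedral_orth.
  + exact: dihedral_type_I2.
  + exact: dihedral_type_I2.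
- exact: dihedralU_simple.
- exact: cartan_dihedral_base4.
Qed.

End TwoFrames.

Section Classification.
Variables (Phi : set V) (alpha : 'I_2 -> V).
Hypotheses (Phi_root : root_system ip Phi) (alpha_simple : simple_system Phi alpha)
  (Phi_pos : forall v, Phi v -> 0 < ip v v)
  (alpha_unit : forall i, ip (alpha i) (alpha i) = 1)
  (alpha01 : ip (alpha 0) (alpha 1) = - cos (pi / n%:R)).

Definition alpha_perp : V :=
  (sin (pi / n%:R))^-1 *: (alpha 1 + cos (pi / n%:R) *: alpha 0).

Lemma alpha_perp_orth : ip (alpha 0) alpha_perp = 0.
Proof. by rewrite /alpha_perp ipZr ipDr ipZr alpha01 alpha_unit; ring. Qed.

Lemma alpha_perp_unit : ip alpha_perp alpha_perp = 1.
Proof.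
rewrite /alpha_perp ipZl ipZr !ipDl !ipDr !ipZl !ipZr !alpha_unit (ipC (alpha 1)) alpha01.
have := sin_pi_div_gt0; have := cos2Dsin2 (pi / n%:R : R).
move: (cos _) (sin _) => c s cs1 s_gt0.
rewrite mulrA -invfM -expr2 (_ : 1 + _ + _ = s ^+ 2); last by lra.
by rewrite mulVf // expf_neq0 // gt_eqF.
Qed.

Let alpha0_unit := alpha_unit 0.

Lemma dihedral_base_alpha : dihedral_base (alpha 0) alpha_perp =1 alpha.
Proof.
move=> i; case: (ord2_cases i) => -> //; rewrite /dihedral_base /= /polar.
rewrite cos_ang_pred_n sin_ang_pred_n /alpha_perp scalerA mulfV ?gt_eqF ?sin_pi_div_gt0 //.
by rewrite scale1r addrCA scaleNr addNr addr0.
Qed.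

Lemma dihedral_sub_root : dihedral (alpha 0) alpha_perp `<=` Phi.
Proof.
have [_ _ Phi_neg _ Phi_refl] := Phi_root.
have [alpha_root _ _] := alpha_simple.
pose r k := polar (alpha 0) alpha_perp (ang k).
have r_refl := refl_polar alpha0_unit alpha_perp_unit alpha_perp_orth.
have r0 : Phi (r 0) by rewrite /r ang0 polar0.
have r_pred : Phi (r (n%:Z - 1)) by have := alpha_root 1; rewrite -dihedral_base_alpha.
have up j : Phi (r j) -> Phi (r (j + 2)).
  move=> rj; have := Phi_refl _ _ r0 (Phi_refl _ _ r_pred rj); rewrite /r !r_refl.
  by rewrite -(polar_angB2n _ _ (j + 2)); congr (Phi (polar _ _ (ang _))); lia.
have down j : Phi (r j) -> Phi (r (j - 2)).
  move=> rj; have := Phi_refl _ _ r_pred (Phi_refl _ _ r0 rj); rewrite /r !r_refl.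
  by rewrite -polar_angB2n; congr (Phi (polar _ _ (ang _))); lia.
have shift := int_shift2 up down.
have r1 : Phi (r 1).
  have [m [nE|nE]] := int_parity n.
    by have := shift _ r_pred (1 - m); congr (Phi (r _)); lia.
  have rn : Phi (r (0 + n%:Z)) by rewrite /r polar_angDn; apply: Phi_neg.
  by have := shift _ rn (- m); congr (Phi (r _)); lia.
move=> _ [k ->]; have [m [kE|kE]] := int_parity k.
  by have := shift _ r0 m; congr (Phi (r _)); lia.
by have := shift _ r1 m; congr (Phi (r _)); lia.
Qed.

Lemma root_sub_dihedral : Phi `<=` dihedral (alpha 0) alpha_perp.
Proof.
have [base_mem _ _] := dihedral_simple alpha0_unit alpha_perp_unit alpha_perp_orth.
have [_ _ Dneg _ Drefl] := dihedral_root_system alpha0_unit alpha_perp_unit alpha_perp_orth.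
apply: (root_sub_simple_closure ip_linl ipC Phi_root alpha_simple Phi_pos
  (rho := alpha 0 + alpha 1)).
- move=> i; have := cos_pi_div_lt1; rewrite ipDr.
  by case: (ord2_cases i) => ->; rewrite ?(ipC (alpha 1)) alpha_unit alpha01 => ?; lra.
- by move=> i; rewrite -(dihedral_base_alpha i).
- exact: Dneg.
- by move=> i v Dv; apply: Drefl Dv; rewrite -(dihedral_base_alpha i).
Qed.

Lemma root_eq_dihedral : Phi = dihedral (alpha 0) alpha_perp.
Proof. by apply/seteqP; split; [exact: root_sub_dihedral | exact: dihedral_sub_root]. Qed.

End Classification.
End InnerProduct.
End Dihedral.

(* Closed forms of [bxor] and [nswaps], which reduce by evaluation: the identities
   between blade indices below are checked by computation over all 8 blades. *)
Definition bxor3 (a b : nat) : nat :=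
  ((bitn 0 a (+) bitn 0 b) + (bitn 1 a (+) bitn 1 b) * 2 + (bitn 2 a (+) bitn 2 b) * 4)%N.
Definition nswaps3 (a b : nat) : nat :=
  ((bitn 1 a && bitn 0 b) + (bitn 2 a && bitn 0 b) + (bitn 2 a && bitn 1 b))%N.

Lemma bxorE a b : bxor a b = bxor3 a b.
Proof. by rewrite /bxor /bxor3 !big_ord_recr big_ord0 /=; lia. Qed.

Lemma nswapsE a b : nswaps a b = nswaps3 a b.
Proof.
rewrite /nswaps !big_ord_recr big_ord0 /=.
rewrite !(big_mkcond (fun j : 'I_3 => (j < _)%N)) /= !big_ord_recr !big_ord0 /= /nswaps3; lia.
Qed.

Definition all_blades (P : pred nat) : bool := all P (iota 0 8).

Lemma all_bladesP P : all_blades P -> forall a : 'I_8, P a.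
Proof. by move=> /allP P_all a; apply: P_all; rewrite mem_iota ltn_ord. Qed.

Lemma bxor3_lt8 (a b : 'I_8) : (bxor3 a b < 8)%N.
Proof.
have table : all_blades (fun a => all_blades (fun b => bxor3 a b < 8)%N) by [].
exact: all_bladesP (all_bladesP table a) b.
Qed.

Lemma bxor3C (a b : 'I_8) : bxor3 a b = bxor3 b a.
Proof.
have table : all_blades (fun a => all_blades (fun b => bxor3 a b == bxor3 b a)) by [].
exact/eqP/(all_bladesP (all_bladesP table a) b).
Qed.

Lemma bxor3A (a b c : 'I_8) : bxor3 (bxor3 a b) c = bxor3 a (bxor3 b c).
Proof.
have table : all_blades (fun a => all_blades (fun b => all_blades (fun c =>
  bxor3 (bxor3 a b) c == bxor3 a (bxor3 b c)))) by [].
exact/eqP/(all_bladesP (all_bladesP (all_bladesP table a) b) c).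
Qed.

(* The sign of [e_A e_B] is a 2-cocycle, which is what makes [clmul] associative. *)
Lemma nswaps3_cocycle (a b c : 'I_8) :
  odd (nswaps3 a b + nswaps3 (bxor3 a b) c)%N = odd (nswaps3 b c + nswaps3 a (bxor3 b c))%N.
Proof.
have table : all_blades (fun a => all_blades (fun b => all_blades (fun c =>
  odd (nswaps3 a b + nswaps3 (bxor3 a b) c)%N ==
  odd (nswaps3 b c + nswaps3 a (bxor3 b c))%N))) by [].
exact/eqP/(all_bladesP (all_bladesP (all_bladesP table a) b) c).
Qed.

Lemma nswaps3_reversal (a b : 'I_8) :
  odd ('C(grade (bxor3 a b), 2) + nswaps3 a b)%N =
  odd ('C(grade a, 2) + 'C(grade b, 2) + nswaps3 b a)%N.
Proof.
have table : all_blades (fun a => all_blades (fun b =>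
  odd ('C(grade (bxor3 a b), 2) + nswaps3 a b)%N ==
  odd ('C(grade a, 2) + 'C(grade b, 2) + nswaps3 b a)%N)) by [].
exact/eqP/(all_bladesP (all_bladesP table a) b).
Qed.

Lemma grade_bxor3 (a b : 'I_8) : odd (grade (bxor3 a b)) = odd (grade a) (+) odd (grade b).
Proof.
have table : all_blades (fun a => all_blades (fun b =>
  odd (grade (bxor3 a b)) == odd (grade a) (+) odd (grade b))) by [].
exact/eqP/(all_bladesP (all_bladesP table a) b).
Qed.

Lemma bxor3_nswaps3_0 (a : 'I_8) :
  [/\ bxor3 0 a = a, nswaps3 0 a = 0%N, bxor3 a 0 = a & nswaps3 a 0 = 0%N].
Proof.
have table : all_blades (fun a =>
  [&& bxor3 0 a == a, nswaps3 0 a == 0%N, bxor3 a 0 == a & nswaps3 a 0 == 0%N]) by [].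
by have /and4P[/eqP ? /eqP ? /eqP ? /eqP ?] := all_bladesP table a.
Qed.

Lemma nswaps3_7C (a : 'I_8) : odd (nswaps3 7 a) = odd (nswaps3 a 7).
Proof.
have table : all_blades (fun a => odd (nswaps3 7 a) == odd (nswaps3 a 7)) by [].
exact/eqP/(all_bladesP table a).
Qed.

Ltac eval_blade_indices := repeat match goal with
  | |- context [nswaps3 ?a ?b] =>
      let v := eval vm_compute in (nswaps3 a b) in rewrite (_ : nswaps3 a b = v); last by []
  | |- context [bxor3 ?a ?b] =>
      let v := eval vm_compute in (bxor3 a b) in rewrite (_ : bxor3 a b = v); last by []
  end.

Section Clifford.
Variable R : realType.
Local Notation Cl := (Cl3 R).
Implicit Types x y z : Cl.

Definition blade_xor (a b : 'I_8) : 'I_8 := inord (bxor3 a b).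

Lemma blade_xorE (a b : 'I_8) : blade_xor a b = bxor3 a b :> nat.
Proof. by rewrite inordK // bxor3_lt8. Qed.

Lemma cl_sum_blades x : x = \sum_a x 0 a *: blade R a.
Proof.
apply/rowP => c; rewrite summxE (bigD1 c) //= big1 ?addr0 => [|a /negbTE ac].
  by rewrite !mxE eqxx mulr1.
by rewrite !mxE eq_sym ac mulr0.
Qed.

Lemma clmulDl x y z : clmul (x + y) z = clmul x z + clmul y z.
Proof.
apply/rowP => c; rewrite !mxE -big_split; apply: eq_bigr => a _.
by rewrite -big_split; apply: eq_bigr => b _; rewrite !mxE /=; ring.
Qed.
Lemma clmulDr x y z : clmul x (y + z) = clmul x y + clmul x z.
Proof.
apply/rowP => c; rewrite !mxE -big_split; apply: eq_bigr => a _.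
by rewrite -big_split; apply: eq_bigr => b _; rewrite !mxE /=; ring.
Qed.
Lemma clmulZl (k : R) x y : clmul (k *: x) y = k *: clmul x y.
Proof.
apply/rowP => c; rewrite !mxE mulr_sumr; apply: eq_bigr => a _.
by rewrite mulr_sumr; apply: eq_bigr => b _; rewrite !mxE /=; ring.
Qed.
Lemma clmulZr (k : R) x y : clmul x (k *: y) = k *: clmul x y.
Proof.
apply/rowP => c; rewrite !mxE mulr_sumr; apply: eq_bigr => a _.
by rewrite mulr_sumr; apply: eq_bigr => b _; rewrite !mxE /=; ring.
Qed.
Lemma clmul0l y : clmul 0 y = 0.
Proof. by rewrite -[X in clmul X _](scale0r (0 : Cl)) clmulZl scale0r. Qed.
Lemma clmul0r y : clmul y 0 = 0.
Proof. by rewrite -[X in clmul _ X](scale0r (0 : Cl)) clmulZr scale0r. Qed.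
Lemma clmulNl x y : clmul (- x) y = - clmul x y.
Proof. by rewrite -scaleN1r clmulZl scaleN1r. Qed.
Lemma clmulNr x y : clmul x (- y) = - clmul x y.
Proof. by rewrite -scaleN1r clmulZr scaleN1r. Qed.
Lemma clmul_suml I r (P : pred I) (F : I -> Cl) y :
  clmul (\sum_(i <- r | P i) F i) y = \sum_(i <- r | P i) clmul (F i) y.
Proof. exact: (big_morph (fun x => clmul x y) (fun x z => clmulDl x z y) (clmul0l y)). Qed.
Lemma clmul_sumr I r (P : pred I) (F : I -> Cl) y :
  clmul y (\sum_(i <- r | P i) F i) = \sum_(i <- r | P i) clmul y (F i).
Proof. exact: (big_morph (clmul y) (clmulDr y) (clmul0r y)). Qed.

Lemma blade_mul (a b : 'I_8) :
  clmul (blade R a) (blade R b) = (-1) ^+ nswaps3 a b *: blade R (blade_xor a b).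
Proof.
apply/rowP => c; rewrite !mxE (bigD1 a) //= [X in _ + X]big1 ?addr0; last first.
  by move=> a' /negbTE a'a; apply: big1 => b' _; rewrite !mxE a'a mulr0 mul0r.
rewrite big_mkcond (bigD1 b) //= [X in _ + X]big1 ?addr0; last first.
  by move=> b' /negbTE b'b; case: ifP => // _; rewrite !mxE b'b mulr0.
rewrite !mxE !eqxx nswapsE bxorE !mulr1.
have -> : (c == blade_xor a b) = (bxor3 a b == c).
  by rewrite eq_sym -(inj_eq val_inj) /= blade_xorE.
by case: eqP; rewrite ?mulr1 ?mulr0.
Qed.

Lemma blade_mulA (a b c : 'I_8) :
  clmul (clmul (blade R a) (blade R b)) (blade R c) =
  clmul (blade R a) (clmul (blade R b) (blade R c)).
Proof.
rewrite !blade_mul clmulZl clmulZr !blade_mul !scalerA -!exprD.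
have -> : blade_xor (blade_xor a b) c = blade_xor a (blade_xor b c).
  by apply/val_inj; rewrite /= !blade_xorE bxor3A.
by rewrite -[in LHS]signr_odd -[in RHS]signr_odd !blade_xorE nswaps3_cocycle.
Qed.

Lemma clmulA x y z : clmul (clmul x y) z = clmul x (clmul y z).
Proof.
rewrite (cl_sum_blades x) !clmul_suml; apply: eq_bigr => a _; rewrite !clmulZl; congr (_ *: _).
rewrite (cl_sum_blades y) clmul_sumr !clmul_suml clmul_sumr; apply: eq_bigr => b _.
rewrite clmulZr !clmulZl clmulZr; congr (_ *: _).
rewrite (cl_sum_blades z) !clmul_sumr; apply: eq_bigr => c _.
by rewrite !clmulZr blade_mulA.
Qed.

Lemma blade_mul_nat (a b : nat) : (a < 8)%N -> (b < 8)%N ->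
  clmul (blade R (inord a)) (blade R (inord b)) =
  (-1) ^+ nswaps3 a b *: blade R (inord (bxor3 a b)).
Proof. by move=> a8 b8; rewrite blade_mul /blade_xor !inordK. Qed.

Lemma clmul1l x : clmul (cl1 R) x = x.
Proof.
rewrite (cl_sum_blades x) clmul_sumr; apply: eq_bigr => b _.
have [b0 nb0 _ _] := bxor3_nswaps3_0 b.
rewrite clmulZr blade_mul inordK // nb0 expr0 scale1r; congr (_ *: blade R _).
by apply/val_inj; rewrite /= blade_xorE inordK.
Qed.
Lemma clmul1r x : clmul x (cl1 R) = x.
Proof.
rewrite (cl_sum_blades x) clmul_suml; apply: eq_bigr => b _.
have [_ _ b0 nb0] := bxor3_nswaps3_0 b.
rewrite clmulZl blade_mul inordK // nb0 expr0 scale1r; congr (_ *: blade R _).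
by apply/val_inj; rewrite /= blade_xorE inordK.
Qed.

Lemma clmul_e123C x : clmul (e123 R) x = clmul x (e123 R).
Proof.
rewrite (cl_sum_blades x) clmul_sumr clmul_suml; apply: eq_bigr => b _.
rewrite clmulZr clmulZl !blade_mul -[in LHS]signr_odd -[in RHS]signr_odd inordK //.
rewrite nswaps3_7C; congr (_ *: (_ *: blade R _)).
by apply/val_inj; rewrite /= !blade_xorE bxor3C.
Qed.

Lemma e123_sqr : clmul (e123 R) (e123 R) = - cl1 R.
Proof. by rewrite blade_mul_nat //=; eval_blade_indices; rewrite -signr_odd /= expr1 scaleN1r. Qed.

Lemma clmul_mule123 x y : clmul (clmul x (e123 R)) (clmul y (e123 R)) = - clmul x y.
Proof. by rewrite clmulA clmul_e123C clmulA e123_sqr !clmulNr clmul1r. Qed.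
Lemma clmul_mule123l x y : clmul (clmul x (e123 R)) y = clmul (clmul x y) (e123 R).
Proof. by rewrite [LHS]clmulA clmul_e123C -clmulA. Qed.

Lemma clrev_blade (a : 'I_8) : clrev (blade R a) = (-1) ^+ 'C(grade a, 2) *: blade R a.
Proof. by apply/rowP => c; rewrite !mxE; case: eqP => [->|_]; rewrite ?mulr0 ?mulr1. Qed.
Lemma clrevD x y : clrev (x + y) = clrev x + clrev y.
Proof. by apply/rowP => c; rewrite !mxE mulrDr. Qed.
Lemma clrevZ (k : R) x : clrev (k *: x) = k *: clrev x.
Proof. by apply/rowP => c; rewrite !mxE mulrCA. Qed.
Lemma clrev0 : clrev (0 : Cl) = 0.
Proof. by apply/rowP => c; rewrite !mxE mulr0. Qed.
Lemma clrev_sum I r (P : pred I) (F : I -> Cl) :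
  clrev (\sum_(i <- r | P i) F i) = \sum_(i <- r | P i) clrev (F i).
Proof. exact: (big_morph clrev clrevD clrev0). Qed.

Lemma clrev_blade_mul (a b : 'I_8) :
  clrev (clmul (blade R a) (blade R b)) = clmul (clrev (blade R b)) (clrev (blade R a)).
Proof.
rewrite !clrev_blade blade_mul clrevZ clrev_blade clmulZl clmulZr blade_mul !scalerA -!exprD.
have -> : blade_xor b a = blade_xor a b by apply/val_inj; rewrite /= !blade_xorE bxor3C.
rewrite -[in LHS]signr_odd -[in RHS]signr_odd blade_xorE addnC nswaps3_reversal.
by congr ((-1) ^+ odd _ *: _); lia.
Qed.

Lemma clrev_mul x y : clrev (clmul x y) = clmul (clrev y) (clrev x).
Proof.
rewrite (cl_sum_blades x) (cl_sum_blades y) clmul_suml !clrev_sum clmul_sumr.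
apply: eq_bigr => a _; rewrite clmul_sumr !clrev_sum clmul_suml; apply: eq_bigr => b _.
by rewrite clmulZl clmulZr !clrevZ clmulZl clmulZr clrev_blade_mul scalerA mulrC -scalerA.
Qed.

Lemma clrev1 : clrev (cl1 R) = cl1 R.
Proof. by rewrite clrev_blade inordK // expr0 scale1r. Qed.
Lemma clrev_e123 : clrev (e123 R) = - e123 R.
Proof. by rewrite clrev_blade inordK // -signr_odd /= expr1 scaleN1r. Qed.

Lemma vecE (v : 'rV[R]_3) :
  vec v = v 0 0 *: blade R (inord 1) + v 0 1 *: blade R (inord 2) + v 0 2 *: blade R (inord 4).
Proof.
rewrite /vec !big_ord_recr big_ord0 /= add0r.
by congr (_ + _ + _); congr (v 0 _ *: _); apply/val_inj.
Qed.

Lemma vecD (u v : 'rV[R]_3) : vec (u + v) = vec u + vec v.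
Proof. by apply/rowP => c; rewrite !vecE !mxE /=; ring. Qed.
Lemma vecZ (k : R) (v : 'rV[R]_3) : vec (k *: v) = k *: vec v.
Proof. by apply/rowP => c; rewrite !vecE !mxE /=; ring. Qed.

Lemma dot3E (u v : 'rV[R]_3) : dot3 u v = u 0 0 * v 0 0 + u 0 1 * v 0 1 + u 0 2 * v 0 2.
Proof.
rewrite /dot3 !mxE !big_ord_recr big_ord0 /= add0r !mxE.
by congr (_ + _ + _); congr (u 0 _ * v 0 _); apply/val_inj.
Qed.

Lemma dot3_linl (c : R) (x y z : 'rV[R]_3) : dot3 (c *: x + y) z = c * dot3 x z + dot3 y z.
Proof. by rewrite !dot3E !mxE; ring. Qed.

Lemma dot3C (x y : 'rV[R]_3) : dot3 x y = dot3 y x.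
Proof. by rewrite !dot3E; ring. Qed.

Lemma dot3_gt0 (x : 'rV[R]_3) : x != 0 -> 0 < dot3 x x.
Proof.
have sq_ge0 i : 0 <= x 0 i * x^T i 0 by rewrite mxE -expr2 sqr_ge0.
move=> x_neq0; rewrite /dot3 mxE lt_def sumr_ge0 ?andbT //; apply: contra x_neq0 => /eqP sum0.
apply/eqP/rowP => i; have /eqP := psumr_eq0P (fun i _ => sq_ge0 i) sum0 (i := i) isT.
by rewrite !mxE -expr2 sqrf_eq0 => /eqP.
Qed.

Lemma vec_anticomm (u v : 'rV[R]_3) :
  clmul (vec u) (vec v) + clmul (vec v) (vec u) = (2 * dot3 u v) *: cl1 R.
Proof.
rewrite !vecE !clmulDl !clmulDr !clmulZl !clmulZr !blade_mul_nat //; eval_blade_indices.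
by rewrite dot3E; apply/rowP => c; rewrite !mxE /=; ring.
Qed.

Lemma vec_sqr (v : 'rV[R]_3) : clmul (vec v) (vec v) = dot3 v v *: cl1 R.
Proof.
rewrite !vecE !clmulDl !clmulDr !clmulZl !clmulZr !blade_mul_nat //; eval_blade_indices.
by rewrite dot3E; apply/rowP => c; rewrite !mxE /=; ring.
Qed.

Lemma clrev_vec (v : 'rV[R]_3) : clrev (vec v) = vec v.
Proof. by rewrite !vecE !clrevD !clrevZ !clrev_blade !inordK // !expr0 !scale1r. Qed.

Definition of_parity (p : bool) x : Prop := forall a : 'I_8, odd (grade a) != p -> x 0 a = 0.

Lemma cl_evenE x : cl_even x <-> of_parity false x.
Proof. by split=> x_even a; move: (x_even a); case: (odd (grade a)) => //; apply. Qed.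

Lemma of_parity_mul p q x y :
  of_parity p x -> of_parity q y -> of_parity (p (+) q) (clmul x y).
Proof.
move=> px qy c c_par; rewrite mxE; apply: big1 => a _; apply: big1 => b /eqP abc.
have [a_par|a_par] := eqVneq (odd (grade a)) p; last by rewrite px // mulr0 mul0r.
have [b_par|b_par] := eqVneq (odd (grade b)) q; last by rewrite qy // mulr0.
by move: c_par; rewrite -abc bxorE grade_bxor3 a_par b_par eqxx.
Qed.
Lemma of_parity_add p x y : of_parity p x -> of_parity p y -> of_parity p (x + y).
Proof. by move=> px py a a_par; rewrite !mxE px // py // addr0. Qed.
Lemma of_parity_scale p (k : R) x : of_parity p x -> of_parity p (k *: x).
Proof. by move=> px a a_par; rewrite !mxE px // mulr0. Qed.
Lemma of_parity_blade p (a : nat) :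
  (a < 8)%N -> odd (grade a) = p -> of_parity p (blade R (inord a)).
Proof.
by move=> a8 <- c; rewrite !mxE; case: (c =P inord a) => [->|//]; rewrite inordK // eqxx.
Qed.
Lemma of_parity1 : of_parity false (cl1 R).
Proof. exact: of_parity_blade. Qed.
Lemma of_parity_e123 : of_parity true (e123 R).
Proof. exact: of_parity_blade. Qed.
Lemma of_parity_vec v : of_parity true (vec v).
Proof.
by rewrite vecE; do !apply: of_parity_add; apply: of_parity_scale; apply: of_parity_blade.
Qed.
Lemma of_parity_eq0 p x : of_parity p x -> of_parity (~~ p) x -> x = 0.
Proof.
move=> px npx; apply/rowP => a; rewrite mxE.
have [a_par|a_par] := eqVneq (odd (grade a)) p; last exact: px.
by apply: npx; rewrite a_par; case: p {a_par px}.
Qed.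

Lemma cl1_neq0 : cl1 R != 0.
Proof. by apply/eqP => /rowP /(_ (inord 0)); rewrite !mxE eqxx /= => /eqP; rewrite oner_eq0. Qed.

Lemma of_parity_polar p x y th : of_parity p x -> of_parity p y -> of_parity p (polar x y th).
Proof. by move=> px py; apply: of_parity_add; apply: of_parity_scale. Qed.

Definition scalar_part x : R := x 0 0.

Lemma scalar_partD x y : scalar_part (x + y) = scalar_part x + scalar_part y.
Proof. by rewrite /scalar_part mxE. Qed.
Lemma scalar_partZ (k : R) x : scalar_part (k *: x) = k * scalar_part x.
Proof. by rewrite /scalar_part mxE. Qed.
Lemma scalar_part1 : scalar_part (cl1 R) = 1.
Proof. by rewrite /scalar_part mxE -(inj_eq val_inj) /= inordK. Qed.
Lemma odd_scalar_part z : of_parity true z -> scalar_part z = 0.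
Proof. by apply. Qed.

Lemma vec_mul_scalar (u v : 'rV[R]_3) : scalar_part (clmul (vec u) (vec v)) = dot3 u v.
Proof.
rewrite /scalar_part !vecE !clmulDl !clmulDr !clmulZl !clmulZr !blade_mul_nat //.
eval_blade_indices.
by rewrite dot3E !mxE -!(inj_eq val_inj) /= !inordK //=; ring.
Qed.

Lemma vec_e123_scalar (v : 'rV[R]_3) : scalar_part (clmul (vec v) (e123 R)) = 0.
Proof.
rewrite /scalar_part !vecE !clmulDl !clmulZl !blade_mul_nat //; eval_blade_indices.
by rewrite !mxE -!(inj_eq val_inj) /= !inordK //=; ring.
Qed.

Lemma spinor_ip_linl (k : R) x y z :
  spinor_ip (k *: x + y) z = k * spinor_ip x z + spinor_ip y z.
Proof.
rewrite /spinor_ip clrevD clrevZ clmulDl clmulZl clmulDr clmulZr.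
by move: (clmul x _) (clmul y _) (clmul z (clrev x)) (clmul z (clrev y)) => *; rewrite !mxE; field.
Qed.

Lemma spinor_ipC x y : spinor_ip x y = spinor_ip y x.
Proof. by rewrite /spinor_ip addrC. Qed.

Lemma spinor_ip_e123 x y : spinor_ip (clmul x (e123 R)) (clmul y (e123 R)) = spinor_ip x y.
Proof.
have e123_rev z v : clmul (clmul z (e123 R)) (clrev (clmul v (e123 R))) = clmul z (clrev v).
  rewrite clrev_mul clrev_e123 clmulNl clmulNr clmulA -(clmulA (e123 R)) e123_sqr.
  by rewrite clmulNl clmul1l clmulNr opprK.
by rewrite /spinor_ip !e123_rev.
Qed.

Section Plane.
Variables u w : 'rV[R]_3.
Hypotheses (u_unit : dot3 u u = 1) (w_unit : dot3 w w = 1) (uw_orth : dot3 u w = 0).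
Local Notation U := (vec u).
Local Notation W := (vec w).
Local Notation B := (clmul (vec u) (vec w)).
Local Notation one := (cl1 R).

Lemma clmulUU : clmul U U = one.
Proof. by rewrite vec_sqr u_unit scale1r. Qed.
Lemma clmulWW : clmul W W = one.
Proof. by rewrite vec_sqr w_unit scale1r. Qed.
Lemma clmulWU : clmul W U = - B.
Proof. by apply/eqP; rewrite -addr_eq0 addrC vec_anticomm uw_orth mulr0 scale0r. Qed.

Definition cl2 (a b c d : R) : Cl := a *: one + b *: U + c *: W + d *: B.

Lemma cl2_mul a b c d a' b' c' d' :
  clmul (cl2 a b c d) (cl2 a' b' c' d') =
  cl2 (a * a' + b * b' + c * c' - d * d') (a * b' + b * a' - c * d' + d * c')
      (a * c' + c * a' + b * d' - d * b') (a * d' + d * a' + b * c' - c * b').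
Proof.
have UB : clmul U B = W by rewrite -clmulA clmulUU clmul1l.
have BW : clmul B W = U by rewrite clmulA clmulWW clmul1r.
have WB : clmul W B = - U by rewrite -clmulA clmulWU clmulNl clmulA clmulWW clmul1r.
have BU : clmul B U = - W by rewrite clmulA clmulWU clmulNr UB.
have BB : clmul B B = - one by rewrite clmulA WB clmulNr clmulUU.
rewrite /cl2 !clmulDl !clmulDr !clmulZl !clmulZr !clmul1l !clmul1r.
rewrite clmulUU clmulWW clmulWU UB BW WB BU BB.
by move: one U W B => e0 e1 e2 e3; apply/rowP => k; rewrite !mxE; ring.
Qed.

Lemma polarUW_cl2 th : polar U W th = cl2 0 (cos th) (sin th) 0.
Proof. by rewrite /polar /cl2 !scale0r add0r addr0. Qed.
Lemma polar1B_cl2 th : polar one B th = cl2 (cos th) 0 0 (sin th).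
Proof. by rewrite /polar /cl2 !scale0r !addr0. Qed.

Lemma clmul_polarUW a b : clmul (polar U W a) (polar U W b) = polar one B (b - a).
Proof. by rewrite !polarUW_cl2 polar1B_cl2 cl2_mul cosB sinB; congr cl2; ring. Qed.
Lemma clmul_polarUW_1B a b : clmul (polar U W a) (polar one B b) = polar U W (a + b).
Proof. by rewrite !polarUW_cl2 polar1B_cl2 cl2_mul cosD sinD; congr cl2; ring. Qed.
Lemma clmul_polar1B_UW a b : clmul (polar one B a) (polar U W b) = polar U W (b - a).
Proof. by rewrite !polarUW_cl2 polar1B_cl2 cl2_mul cosB sinB; congr cl2; ring. Qed.
Lemma clmul_polar1B a b : clmul (polar one B a) (polar one B b) = polar one B (a + b).
Proof. by rewrite !polar1B_cl2 cl2_mul cosD sinD; congr cl2; ring. Qed.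

Lemma clrev_cl2 a b c d : clrev (cl2 a b c d) = cl2 a b c (- d).
Proof.
have clrevB : clrev B = - B by rewrite clrev_mul !clrev_vec clmulWU.
by rewrite /cl2 !clrevD !clrevZ clrev1 !clrev_vec clrevB scalerN scaleNr.
Qed.

Lemma cl2_scalar a b c d : scalar_part (cl2 a b c d) = a.
Proof.
rewrite /cl2 !scalar_partD !scalar_partZ scalar_part1 vec_mul_scalar uw_orth.
by rewrite (odd_scalar_part (of_parity_vec u)) (odd_scalar_part (of_parity_vec w)); ring.
Qed.

Lemma cl2e123_scalar a b c d : scalar_part (clmul (cl2 a b c d) (e123 R)) = 0.
Proof.
rewrite /cl2 !clmulDl !clmulZl clmul1l clmulA !scalar_partD !scalar_partZ !vec_e123_scalar.
have UWe123 : of_parity true (clmul U (clmul W (e123 R))).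
  exact: (of_parity_mul (of_parity_vec u) (of_parity_mul (of_parity_vec w) of_parity_e123)).
by rewrite (odd_scalar_part UWe123) (odd_scalar_part of_parity_e123) !mulr0 !addr0.
Qed.

Lemma spinor_ip_cl2 a b c d a' b' c' d' :
  spinor_ip (cl2 a b c d) (cl2 a' b' c' d') = a * a' + b * b' + c * c' + d * d'.
Proof.
by rewrite /spinor_ip -/(scalar_part _) !clrev_cl2 !cl2_mul scalar_partD !cl2_scalar; field.
Qed.

Lemma spinor_ip_cl2_e123 a b c d a' b' c' d' :
  spinor_ip (cl2 a b c d) (clmul (cl2 a' b' c' d') (e123 R)) = 0.
Proof.
set x := cl2 a b c d; set y := cl2 a' b' c' d'.
rewrite /spinor_ip.
have -> : clmul x (clrev (clmul y (e123 R))) = - clmul (clmul x (clrev y)) (e123 R).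
  by rewrite clrev_mul clrev_e123 clmulNl clmulNr clmul_e123C clmulA.
rewrite clmul_mule123l.
rewrite -/(scalar_part _) scalar_partD -scaleN1r scalar_partZ /x /y !clrev_cl2 !cl2_mul.
by rewrite !cl2e123_scalar mulr0 add0r mul0r.
Qed.

End Plane.
End Clifford.

Section SpinGroup.
Variables (R : realType) (n : nat) (Phi : set 'rV[R]_3) (alpha : 'I_2 -> 'rV[R]_3).
Hypotheses (n_ge2 : (2 <= n)%N) (Phi_root : root_system dot3 Phi)
  (alpha_simple : simple_system Phi alpha) (alpha_unit : forall i, dot3 (alpha i) (alpha i) = 1)
  (alpha01 : dot3 (alpha 0) (alpha 1) = - cos (pi / n%:R)).

Local Notation u := (alpha 0).
Local Notation w := (alpha_perp n alpha).
Local Notation U := (vec u).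
Local Notation W := (vec w).
Local Notation B := (clmul (vec u) (vec w)).
Local Notation I := (e123 R).
Local Notation one := (cl1 R).
Local Notation ang := (ang R n).

Let u_unit : dot3 u u = 1 := alpha_unit 0.
Let w_unit : dot3 w w = 1 := alpha_perp_unit n_ge2 (@dot3_linl R) (@dot3C R) alpha_unit alpha01.
Let uw_orth : dot3 u w = 0 := alpha_perp_orth (@dot3_linl R) (@dot3C R) alpha_unit alpha01.

Lemma Phi_dihedral : Phi = dihedral n u w.
Proof.
have [_ Phi_neq0 _ _ _] := Phi_root.
apply: (root_eq_dihedral n_ge2 (@dot3_linl R) (@dot3C R) Phi_root alpha_simple _
  alpha_unit alpha01).
by move=> v /Phi_neq0; apply: dot3_gt0.
Qed.

Lemma vec_polar th : vec (polar u w th) = polar U W th.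
Proof. by rewrite /polar vecD !vecZ. Qed.

Definition frame_elt (odd : bool) (th : R) : Cl3 R :=
  if odd then polar U W th else polar one B th.

Definition versor (odd dual : bool) (th : R) : Cl3 R :=
  if dual then clmul (frame_elt odd th) I else frame_elt odd th.

Definition versors : set (Cl3 R) :=
  [set x | exists odd dual (k : int), x = versor odd dual (ang k)].

Lemma frame_elt_mul o1 o2 k1 k2 : exists k,
  clmul (frame_elt o1 (ang k1)) (frame_elt o2 (ang k2)) = frame_elt (o1 (+) o2) (ang k).
Proof.
case: o1; case: o2; rewrite /frame_elt /=.
- by exists (k2 - k1); rewrite clmul_polarUW // angD angN.
- by exists (k1 + k2); rewrite clmul_polarUW_1B // angD.
- by exists (k2 - k1); rewrite clmul_polar1B_UW // angD angN.
- by exists (k1 + k2); rewrite clmul_polar1B // angD.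
Qed.

Lemma frame_eltN o k : - frame_elt o (ang k) = frame_elt o (ang (k + n)).
Proof. by case: o; rewrite /frame_elt polar_angDn ?opprK. Qed.

Lemma frame_elt_inv o k : exists k', clmul (frame_elt o (ang k')) (frame_elt o (ang k)) = one.
Proof.
case: o; rewrite /frame_elt.
- by exists k; rewrite clmul_polarUW // subrr polar0.
- by exists (- k); rewrite clmul_polar1B // angN addNr polar0.
Qed.

Lemma versors_mul x y : versors x -> versors y -> versors (clmul x y).
Proof.
move=> [o1 [d1 [k1 ->]]] [o2 [d2 [k2 ->]]].
have [k frame_k] := frame_elt_mul o1 o2 k1 k2.
case: d1; case: d2; rewrite /versor.
- by exists (o1 (+) o2), false, (k + n); rewrite clmul_mule123 frame_k frame_eltN.
- by exists (o1 (+) o2), true, k; rewrite clmul_mule123l frame_k.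
- by exists (o1 (+) o2), true, k; rewrite -clmulA frame_k.
- by exists (o1 (+) o2), false, k; rewrite frame_k.
Qed.

Lemma versors_inv x : versors x -> exists2 z, versors z & clmul z x = one.
Proof.
move=> [o [d [k ->]]]; have [k' inv_k] := frame_elt_inv o k.
case: d; rewrite /versor.
- exists (clmul (frame_elt o (ang (k' + n))) I); first by exists o, true, (k' + n).
  by rewrite clmul_mule123 -frame_eltN clmulNl inv_k opprK.
- by exists (frame_elt o (ang k')) => //; exists o, false, k'.
Qed.

Lemma versors_neq0 x : versors x -> x != 0.
Proof.
move=> /versors_inv [z _]; apply: contra_eq_neq => ->.
by rewrite clmul0r eq_sym cl1_neq0.
Qed.

Lemma gen_group_sub_versors : gen_group ((vec @` Phi) `|` [set I]) `<=` versors.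
Proof.
move=> x; elim => {x}.
- by exists false, false, 0; rewrite /versor /frame_elt ang0 polar0.
- move=> x [[v Phiv <-]|->].
  + by move: Phiv; rewrite Phi_dihedral => -[k ->]; exists true, false, k; rewrite vec_polar.
  + by exists false, true, 0; rewrite /versor /frame_elt ang0 polar0 clmul1l.
- by move=> x y _ Vx _ Vy; apply: versors_mul.
- move=> x y _ Vx xy yx; have [z Vz zx] := versors_inv Vx.
  by rewrite -[y]clmul1l -zx clmulA xy clmul1r.
Qed.

Lemma clmul_polar_e123 x y th : clmul (polar x y th) I = polar (clmul x I) (clmul y I) th.
Proof. by rewrite /polar clmulDl !clmulZl. Qed.

Lemma even_gen_group :
  gen_group ((vec @` Phi) `|` [set I]) `&` @cl_even R =
  dihedral n one B `|` dihedral n (clmul U I) (clmul W I).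
Proof.
have gen_polar k : gen_group ((vec @` Phi) `|` [set I]) (polar U W (ang k)).
  by apply: gg_gen; left; exists (polar u w (ang k)); rewrite ?vec_polar // Phi_dihedral; exists k.
have gen_e123 : gen_group ((vec @` Phi) `|` [set I]) I by apply: gg_gen; right.
have par_UW th : of_parity true (polar U W th) by apply: of_parity_polar; apply: of_parity_vec.
have par_1B th : of_parity false (polar one B th).
  apply: of_parity_polar; first exact: (of_parity1 R).
  exact: of_parity_mul (of_parity_vec u) (of_parity_vec w).
apply/seteqP; split.
- move=> x [/gen_group_sub_versors Vx /cl_evenE x_even]; move: (versors_neq0 Vx).
  case: Vx x_even => [o [d [k ->]]]; case: o; case: d; rewrite /versor /frame_elt => x_even x_neq0.
  + by right; exists k; rewrite clmul_polar_e123.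
  + by move: x_neq0; rewrite (of_parity_eq0 (par_UW _) x_even) eqxx.
  + have par_1BI := of_parity_mul (par_1B (ang k)) (of_parity_e123 R).
    by move: x_neq0; rewrite (of_parity_eq0 par_1BI x_even) eqxx.
  + by left; exists k.
- move=> x [[k ->]|[k ->]]; split.
  + have -> : polar one B (ang k) = clmul U (polar U W (ang k)).
      by rewrite -[X in _ = clmul X _](polar0 U W) clmul_polarUW // subr0.
    by apply: gg_mul => //; have := gen_polar 0; rewrite ang0 polar0.
  + exact/cl_evenE/par_1B.
  + by rewrite -clmul_polar_e123; apply: gg_mul.
  + apply/cl_evenE; rewrite -clmul_polar_e123.
    exact: of_parity_mul (par_UW _) (of_parity_e123 R).
Qed.

Let one_cl2 : one = cl2 u w 1 0 0 0.
Proof. by rewrite /cl2 scale1r !scale0r !addr0. Qed.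
Let U_cl2 : U = cl2 u w 0 1 0 0.
Proof. by rewrite /cl2 scale1r !scale0r add0r !addr0. Qed.
Let W_cl2 : W = cl2 u w 0 0 1 0.
Proof. by rewrite /cl2 scale1r !scale0r !add0r addr0. Qed.
Let B_cl2 : B = cl2 u w 0 0 0 1.
Proof. by rewrite /cl2 scale1r !scale0r !add0r. Qed.

Let ip_cl2 := spinor_ip_cl2 u_unit w_unit uw_orth.
Let ip_cl2_e123 := spinor_ip_cl2_e123 u_unit w_unit uw_orth.

Let one_unit : spinor_ip one one = 1. Proof. by rewrite one_cl2 ip_cl2; ring. Qed.
Let B_unit : spinor_ip B B = 1. Proof. by rewrite B_cl2 ip_cl2; ring. Qed.
Let oneB_orth : spinor_ip one B = 0. Proof. by rewrite one_cl2 B_cl2 ip_cl2; ring. Qed.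
Let UI_unit : spinor_ip (clmul U I) (clmul U I) = 1.
Proof. by rewrite spinor_ip_e123 U_cl2 ip_cl2; ring. Qed.
Let WI_unit : spinor_ip (clmul W I) (clmul W I) = 1.
Proof. by rewrite spinor_ip_e123 W_cl2 ip_cl2; ring. Qed.
Let UIWI_orth : spinor_ip (clmul U I) (clmul W I) = 0.
Proof. by rewrite spinor_ip_e123 U_cl2 W_cl2 ip_cl2; ring. Qed.
Let oneUI_orth : spinor_ip one (clmul U I) = 0. Proof. by rewrite one_cl2 U_cl2 ip_cl2_e123. Qed.
Let oneWI_orth : spinor_ip one (clmul W I) = 0. Proof. by rewrite one_cl2 W_cl2 ip_cl2_e123. Qed.
Let BUI_orth : spinor_ip B (clmul U I) = 0. Proof. by rewrite B_cl2 U_cl2 ip_cl2_e123. Qed.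
Let BWI_orth : spinor_ip B (clmul W I) = 0. Proof. by rewrite B_cl2 W_cl2 ip_cl2_e123. Qed.

Lemma simple_spinors_eq :
  (fun i : 'I_4 => nth 0 [:: clmul U U; clmul U (vec (alpha 1)); clmul U I;
                             clmul (vec (alpha 1)) I] i) =
  dihedral_base4 n one B (clmul U I) (clmul W I).
Proof.
have a1E : vec (alpha 1) = polar U W (ang (n%:Z - 1)).
  by rewrite -(dihedral_base_alpha n_ge2 alpha 1) vec_polar.
apply/funext => i; rewrite /dihedral_base4 a1E clmulUU // -clmul_polar_e123.
by rewrite -[X in clmul X (polar _ _ _)](polar0 U W) clmul_polarUW // subr0.
Qed.

Lemma spinor_frames_I2I2 :
  let E := dihedral n one B `|` dihedral n (clmul U I) (clmul W I) in
  let beta := dihedral_base4 n one B (clmul U I) (clmul W I) in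
  [/\ root_system (@spinor_ip R) E, is_type_I2I2 (@spinor_ip R) n E,
      simple_system E beta & cartan (@spinor_ip R) beta = I2I2cartan R n].
Proof.
exact: (dihedralU_I2I2 n_ge2 (@spinor_ip_linl R) (@spinor_ipC R) one_unit B_unit oneB_orth
  UI_unit WI_unit UIWI_orth oneUI_orth oneWI_orth BUI_orth BWI_orth).
Qed.

End SpinGroup.

Theorem mainTheorem4 (R : realType) (n : nat) (Phi : set 'rV[R]_3)
  (alpha : 'I_2 -> 'rV[R]_3) :
  (2 <= n)%N ->
  is_type_I2 (@dot3 R) n Phi ->
  simple_system Phi alpha ->
  (forall i, dot3 (alpha i) (alpha i) = 1) ->
  dot3 (alpha 0) (alpha 1) = - cos (pi / n%:R) ->
  let P := gen_group ((vec @` Phi) `|` [set e123 R]) in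
  let G := P `&` @cl_even R in
  let a1 := vec (alpha 0) in
  let a2 := vec (alpha 1) in
  let beta : 'I_4 -> Cl3 R :=
    fun i => nth 0 [:: clmul a1 a1; clmul a1 a2; clmul a1 (e123 R);
                       clmul a2 (e123 R)] i in
  [/\ root_system (@spinor_ip R) G,
      is_type_I2I2 (@spinor_ip R) n G,
      simple_system G beta
    & cartan (@spinor_ip R) beta = I2I2cartan R n].
Proof.
move=> n_ge2 [Phi_root _] alpha_simple alpha_unit alpha01 P G a1 a2 beta.
rewrite /G /P (even_gen_group n_ge2 Phi_root alpha_simple alpha_unit alpha01).
rewrite /beta /a1 /a2 (simple_spinors_eq n_ge2 alpha_unit alpha01).
exact: spinor_frames_I2I2.
Qed.
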